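(* Let $F=C^\infty(]0,1[,\mathbb{R})$ with the Fr\'echet topology given by the seminorms $\|f\|_{n,k}=\sup_{\frac{1}{n+1}\le x\le\frac{n}{n+1}}|f^{(k)}(x)|$, $(n,k)\in\mathbb{N}^*\times\mathbb{N}$. Let $\mathcal{A}=\{f\in C^\infty(]0,1[,]0,1[)\mid \lim_{x\to1}f(x)=1,\ \lim_{x\to0}f(x)=0\}$ and $\mathcal{D}=\{f\in\mathcal{A}\mid \inf_{x\in]0,1[}f'(x)>0 \text{ and } \sup_{x\in]0,1[}f'(x)>0\}\subset F$. Let $P\in\mathbb{R}[x]$ with $P(0)=P(1)=0$, $0<P(x)<\min(x,1-x)$ on $]0,1[$ and $\sup_{]0,1[}|P'|<1$, let $\varphi(t,x)=\frac{P(x)t}{(1-P(x))t+P(x)}$ and $c_t(x)=x+\varphi(t,x)$ for $t\ge0$, $c_t(x)=x-\varphi(-t,x)$ for $t<0$. Then the path $t\mapsto c_t$ is of class $C^1$ from $]-1,1[$ to $\mathcal{D}$, and $\partial_t c_t|_{t=0}=\mathbf{1}$ is the constant function equal to $1$. *)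

From HB Require Import structures.
From mathcomp Require Import all_boot all_order all_algebra.
From mathcomp Require Import all_classical all_reals all_analysis.
Set Implicit Arguments. Unset Strict Implicit. Unset Printing Implicit Defensive.
Import Order.TTheory GRing.Theory Num.Theory.
Import numFieldNormedType.Exports.
Local Open Scope classical_set_scope.
Local Open Scope ring_scope.

Section Defs.
Variable R : realType.

(* Elements of F = C^oo(]0,1[, R) are represented by functions R -> R;
   only their values on ]0,1[ matter. *)
Definition smooth01 (f : R -> R) : Prop :=
  forall (k : nat) (x : R), 0 < x < 1 -> derivable (derive1n k f) x 1.

Definition seminorm (n k : nat) (f : R -> R) : \bar R :=
  ereal_sup [set (`|derive1n k f x|)%:E | x in
               `[(n.+1%:R)^-1, n%:R / n.+1%:R]%classic].

Definition frechet_cvg {T : Type} (Fl : set_system T) (g : T -> R -> R)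
    (l : R -> R) : Prop :=
  forall (n k : nat), (0 < n)%N ->
    seminorm n k (fun x => g t x - l x) @[t --> Fl] --> (0 : \bar R)%E.

Definition setA01 : set (R -> R) := fun f =>
  [/\ smooth01 f,
      (forall x, 0 < x < 1 -> 0 < f x < 1),
      f x @[x --> (1:R)^'-] --> (1:R) &
      f x @[x --> (0:R)^'+] --> (0:R)].

Definition open01 : set R := `](0:R), (1:R)[%classic.

Definition setD01 : set (R -> R) := fun f =>
  [/\ setA01 f,
      (0 < ereal_inf [set (derive1 f x)%:E | x in open01])%E &
      (0 < ereal_sup [set (derive1 f x)%:E | x in open01])%E].

Definition phi (P : {poly R}) (t x : R) : R :=
  P.[x] * t / ((1 - P.[x]) * t + P.[x]).

Definition cpath (P : {poly R}) (t : R) : R -> R := fun x =>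
  if 0 <= t then x + phi P t x else x - phi P (- t) x.

Definition C1_path_F (c c' : R -> R -> R) : Prop :=
  [/\ (forall t : R, -1 < t < 1 -> smooth01 (c' t)),
      (forall t0 : R, -1 < t0 < 1 ->
         frechet_cvg (0 : R)^' (fun h => fun x => (c (t0 + h) x - c t0 x) / h)
                     (c' t0)) &
      (forall t0 : R, -1 < t0 < 1 -> frechet_cvg (nbhs t0) c' (c' t0))].

End Defs.

From HB Require Import structures.
From mathcomp Require Import all_boot all_order all_algebra.
From mathcomp Require Import all_classical all_reals all_analysis.
From mathcomp Require Import ring lra.
Import Order.TTheory GRing.Theory Num.Theory.
Import numFieldNormedType.Exports.
Local Open Scope classical_set_scope.
Local Open Scope ring_scope.

Set Implicit Arguments. Unset Strict Implicit. Unset Printing Implicit Defensive.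

(* Write D_p(x) = p + (1 - p) P(x); for p in [0,1] and x in ]0,1[ one has
   D_p(x) >= max(p, P(x)) > 0.  Every function in sight is a finite sum of
   terms a(t) q(x) / (D_{p_1(t)}(x) ... D_{p_k(t)}(x)) with q a polynomial and
   p_i(t) in [0,1]: c_t(x) = x + t P(x) / D_|t|(x), its t-derivative is
   (P / D_|t|)^2, and both the difference quotient of c minus that derivative
   and the increments of the derivative are such sums whose coefficients are
   |t| - |s|.  By the quotient rule these sums are closed under
   d/dx, which gives smoothness; on [1/(n+1), n/(n+1)] the polynomial P is
   bounded below by a positive constant, so every x-derivative of such a sum is
   bounded there by a constant times its coefficients, and convergence in the
   Frechet topology reduces to the convergence of these coefficients to 0.
   Finally |c_t(x) - x| <= P(x) < min(x, 1 - x) and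
   c_t' = 1 + t |t| P' / D_|t|^2 >= 1 - sup |P'| > 0 put c_t in D. *)

Lemma near_in01 (R : realType) (x : R) : 0 < x < 1 -> \forall y \near x, 0 < y < 1.
Proof.
move=> x01; have := @near_in_itvoo R 0 1 x; rewrite in_itv /= => /(_ x01).
by apply: filterS => y; rewrite in_itv.
Qed.

Lemma derive1n_eq01 (R : realType) (f g : R -> R) :
  (forall x, 0 < x < 1 -> f x = g x) ->
  forall k x, 0 < x < 1 -> derive1n k f x = derive1n k g x.
Proof.
move=> fg; elim=> [|k IH] x x01; first exact: fg.
rewrite !derive1nS !derive1E; apply: near_eq_derive.
by apply: filterS (near_in01 x01) => y; exact: IH.
Qed.

Lemma normr_le1_in01 (R : realType) (t : R) : `|t| <= 1 -> 0 <= `|t| <= 1.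
Proof. by move=> ->; rewrite normr_ge0. Qed.

Lemma poly_bounded01 (R : realType) (q : {poly R}) :
  exists M : R, forall x, 0 <= x <= 1 -> `|q.[x]| <= M.
Proof.
elim/poly_ind: q => [|q c [M qM]]; first by exists 0 => x _; rewrite horner0 normr0.
exists (`|M| + `|c|) => x x01; rewrite hornerMXaddC.
apply: (le_trans (ler_normD _ _)); apply: lerD => //.
have x1 : `|x| <= 1 by case/andP: x01 => x0 ?; rewrite ger0_norm.
rewrite normrM -[leRHS]mulr1; apply: ler_pM => //.
exact: le_trans (qM x x01) (ler_norm M).
Qed.

Lemma ereal_sup_lt_bound (R : realType) (A : set R) (f : R -> R) (a : R) :
  (ereal_sup [set (f x)%:E | x in A] < a%:E)%E ->
  exists2 r, r < a & forall x, A x -> f x <= r.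
Proof.
set S := ereal_sup _ => Sa.
have ub x : A x -> ((f x)%:E <= S)%E by move=> Ax; apply: ereal_sup_ubound; exists x.
move: Sa ub; case: S => [s| |] // sa ub.
  by exists s => [|x /ub]; rewrite -?lte_fin -?lee_fin.
by exists (a - 1) => [|x /ub]; rewrite ?gtrBl ?leeNy_eq.
Qed.

Lemma cvg0_bounded_mul (R : realType) (T : Type) (F : set_system T) {FF : Filter F}
    (a c : T -> R) (M : R) : 0 < M ->
  (\forall t \near F, `|a t| <= M) -> c @ F --> 0 ->
  (fun t => a t * c t) @ F --> 0.
Proof.
move=> M0 aM /cvgr0Pnorm_le c0; apply/cvgr0Pnorm_le => e e0.
have := c0 (e / M); rewrite divr_gt0 // => /(_ isT).
apply: filterS2 aM => t at_ ct; rewrite normrM.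
have := ler_pM (normr_ge0 _) (normr_ge0 _) at_ ct.
by rewrite [M * _]mulrC divfK ?lt0r_neq0.
Qed.

Lemma cvg_abs_sub0 (R : realType) (T : Type) (F : set_system T) {FF : Filter F}
    (f : T -> R) (t : R) :
  f @ F --> t -> (fun s => `|t| - `|f s|) @ F --> (0:R).
Proof.
move=> ft; rewrite -[X in _ --> X](subrr `|t|).
by apply: cvgB; [exact: cvg_cst | exact: cvg_norm].
Qed.

Lemma near0_mul_shift_ge0 (R : realType) (t : R) :
  \forall h \near (0:R), 0 <= t * (t + h).
Proof.
have [->|t0] := eqVneq t 0; first by near=> h; rewrite mul0r.
have tt : (fun h => t * (t + h)) @ (0:R) --> t * (t + 0).
  by apply: cvgM; [exact: cvg_cst | apply: cvgD; [exact: cvg_cst | exact: cvg_id]].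
have t2 : 0 < t * t by rewrite -expr2 exprn_even_gt0 //= t0 orbT.
rewrite addr0 in tt; near=> h; apply: ltW; near: h; exact: cvgr_gt tt _ t2.
Unshelve. all: by end_near.
Qed.

Lemma seminorm_itv_le (R : realType) (n : nat) : (0 < n)%N ->
  (n.+1%:R : R)^-1 <= n%:R / n.+1%:R.
Proof.
move=> n0; rewrite -[leLHS]mul1r ler_wpM2r ?invr_ge0 ?ler0n //.
by rewrite ler1n.
Qed.

Lemma seminorm_itv_sub01 (R : realType) (n : nat) (x : R) :
  x \in `[(n.+1%:R)^-1, n%:R / n.+1%:R] -> 0 < x < 1.
Proof.
have n1 : (0 : R) < n.+1%:R by rewrite ltr0n.
rewrite in_itv /= => /andP[ax xb]; apply/andP; split.
  by apply: lt_le_trans ax; rewrite invr_gt0.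
by apply: le_lt_trans xb _; rewrite ltr_pdivrMr // mul1r ltr_nat.
Qed.

Section NearIdentity.
Variables (R : realType) (f e : R -> R).
Hypothesis f_near_id : forall x, 0 < x < 1 -> `|f x - x| <= e x.
Hypothesis e_small : forall x, 0 < x < 1 -> e x < Num.min x (1 - x).

Lemma near_id_bounds x : 0 < x < 1 -> 0 < f x < 1 /\ 2 * x - 1 <= f x <= 2 * x.
Proof.
move=> x01; have := e_small x01; rewrite lt_min => /andP[ex e1x].
move: (f_near_id x01); rewrite ler_distl => /andP[fl fu].
by split; apply/andP; split; lra.
Qed.

Lemma near_id_cvg1 : f x @[x --> (1:R)^'-] --> (1:R).
Proof.
apply: (@squeeze_cvgr _ _ _ _ (fun x => 2 * x - 1) (fun=> 1)).
- near=> x; have x01 : 0 < x < 1.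
    by apply/andP; split; near: x; [apply: nbhs_left_gt; exact: ltr01 | exact: nbhs_left_lt].
  have [/andP[_ /ltW f1] /andP[fl _]] := near_id_bounds x01.
  by rewrite fl f1.
- apply: cvg_at_left_filter.
  have e1 : (1 : R) = 2 * 1 - 1 by ring.
  rewrite [X in _ --> X]e1.
  by apply: cvgB; [apply: cvgM; [exact: cvg_cst | exact: cvg_id] | exact: cvg_cst].
- exact: cvg_cst.
Unshelve. all: by end_near.
Qed.

Lemma near_id_cvg0 : f x @[x --> (0:R)^'+] --> (0:R).
Proof.
apply: (@squeeze_cvgr _ _ _ _ (fun=> 0) (fun x => 2 * x)).
- near=> x; have x01 : 0 < x < 1.
    by apply/andP; split; near: x; [exact: nbhs_right_gt | apply: nbhs_right_lt; exact: ltr01].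
  have [/andP[/ltW f0 _] /andP[_ fu]] := near_id_bounds x01.
  by rewrite f0 fu.
- exact: cvg_cst.
- apply: cvg_at_right_filter; rewrite -[X in _ --> X](mulr0 (2:R)).
  by apply: cvgM; [exact: cvg_cst | exact: cvg_id].
Unshelve. all: by end_near.
Qed.

End NearIdentity.

Section Fractions.
Variables (R : realType) (P : {poly R}).
Hypothesis P01 : forall x, 0 < x < 1 -> 0 < P.[x] < 1.

Definition denP (p x : R) : R := p + (1 - p) * P.[x].

Lemma denP_ge_param p x : 0 <= p <= 1 -> 0 < x < 1 -> p <= denP p x.
Proof.
move=> /andP[p0 p1] /P01 /andP[Px0 _]; rewrite /denP lerDl.
by apply: mulr_ge0; [rewrite subr_ge0 | exact: ltW].
Qed.

Lemma denP_ge_P p x : 0 <= p <= 1 -> 0 < x < 1 -> P.[x] <= denP p x.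
Proof.
move=> /andP[p0 p1] /P01 /andP[_ Px1]; rewrite /denP.
have : 0 <= p * (1 - P.[x]) by rewrite mulr_ge0 // subr_ge0 ltW.
nra.
Qed.

Lemma denP_gt0 p x : 0 <= p <= 1 -> 0 < x < 1 -> 0 < denP p x.
Proof.
move=> p01 x01; have /andP[Px0 _] := P01 x01.
exact: lt_le_trans Px0 (denP_ge_P p01 x01).
Qed.

Lemma is_derive_denP p x : is_derive x (1:R) (denP p) ((1 - p) * P^`().[x]).
Proof. by rewrite /denP; apply: is_derive_eq; rewrite add0r mul1r. Qed.

Variable T : Type.

Record term := Term { coef : T -> R; numer : {poly R}; params : seq (T -> R) }.

Definition denprod (ps : seq (T -> R)) (t : T) (x : R) : R :=
  \prod_(p <- ps) denP (p t) x.

Definition eval_term (tm : term) (t : T) (x : R) : R :=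
  coef tm t * (numer tm).[x] / denprod (params tm) t x.

Definition eval_terms (L : seq term) (t : T) (x : R) : R :=
  \sum_(tm <- L) eval_term tm t x.

Lemma denprod_nil t x : denprod [::] t x = 1.
Proof. by rewrite /denprod big_nil. Qed.

Lemma denprod_cons p ps t x : denprod (p :: ps) t x = denP (p t) x * denprod ps t x.
Proof. by rewrite /denprod big_cons. Qed.

Lemma eval_terms_nil t x : eval_terms [::] t x = 0.
Proof. by rewrite /eval_terms big_nil. Qed.

Lemma eval_terms_cons tm L t x :
  eval_terms (tm :: L) t x = eval_term tm t x + eval_terms L t x.
Proof. by rewrite /eval_terms big_cons. Qed.

(* The quotient rule, with (1 / D_p)' = - (1 - p) P' / D_p ^ 2. *)
Definition derive_term (tm : term) : seq term :=
  Term (coef tm) (numer tm)^`() (params tm) ::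
  [seq Term (fun t => - (1 - p t) * coef tm t) (numer tm * P^`()) (p :: params tm)
  | p <- params tm].

Definition derive_terms (L : seq term) : seq term := flatten (map derive_term L).

Definition params01 (t : T) (ps : seq (T -> R)) : bool :=
  all (fun p => 0 <= p t <= 1) ps.

Definition terms01 (t : T) (L : seq term) : bool :=
  all (fun tm => params01 t (params tm)) L.

Lemma terms01_derive t L : terms01 t L -> terms01 t (derive_terms L).
Proof.
elim: L => // tm L IH /andP[tm01 L01].
have -> : derive_terms (tm :: L) = derive_term tm ++ derive_terms L by [].
rewrite /terms01 all_cat -/(terms01 t (derive_terms L)) IH // andbT /= tm01 all_map.
by apply: sub_all (tm01) => p /= ->.
Qed.

Lemma terms01_iter k t L : terms01 t L -> terms01 t (iter k derive_terms L).
Proof. by move=> L01; elim: k => //= k; exact: terms01_derive. Qed.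

Lemma denprod_gt0 t ps (x : R) : params01 t ps -> 0 < x < 1 -> 0 < denprod ps t x.
Proof.
move=> + x01; elim: ps => [|p ps IH]; first by rewrite denprod_nil.
by rewrite denprod_cons => /andP[p01 /IH ?]; rewrite mulr_gt0 // denP_gt0.
Qed.

Lemma is_derive_inv_denprod t ps (x : R) : params01 t ps -> 0 < x < 1 ->
  is_derive x (1:R) (fun y => (denprod ps t y)^-1)
    (\sum_(p <- ps) - (1 - p t) * P^`().[x] / (denP (p t) x * denprod ps t x)).
Proof.
move=> + x01; elim: ps => [_|p ps IH /andP[p01 ps01]].
  rewrite big_nil; under eq_fun do rewrite denprod_nil invr1.
  exact: is_derive_cst.
have Dp0 := lt0r_neq0 (denP_gt0 p01 x01).
have Dps0 := lt0r_neq0 (denprod_gt0 ps01 x01).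
have -> : (fun y => (denprod (p :: ps) t y)^-1) =
    (fun y => (denP (p t) y)^-1) * (fun y => (denprod ps t y)^-1).
  by apply/funext => y; rewrite denprod_cons invfM.
apply: is_derive_eq.
  exact: is_deriveM (is_deriveV Dp0 (is_derive_denP _ _)) (IH ps01).
rewrite big_cons !denprod_cons /GRing.scale /= addrC.
congr (_ + _); first by field; rewrite Dp0 Dps0.
by rewrite mulr_sumr; apply: eq_bigr => q _; rewrite !invfM; ring.
Qed.

Lemma is_derive_eval_term tm t (x : R) : params01 t (params tm) -> 0 < x < 1 ->
  is_derive x (1:R) (eval_term tm t) (eval_terms (derive_term tm) t x).
Proof.
move=> tm01 x01.
have -> : eval_term tm t =
    (fun y => coef tm t * (numer tm).[y]) * (fun y => (denprod (params tm) t y)^-1).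
  by apply/funext => y; rewrite /eval_term.
apply: is_derive_eq; first by apply: is_deriveM; exact: is_derive_inv_denprod.
rewrite eval_terms_cons /eval_terms big_map /eval_term /GRing.scale /= mulr_sumr.
rewrite addrC; congr (_ + _); first by rewrite mulrC.
by apply: eq_bigr => p _ /=; rewrite denprod_cons !invfM hornerM; ring.
Qed.

Lemma is_derive_eval_terms L t (x : R) : terms01 t L -> 0 < x < 1 ->
  is_derive x (1:R) (eval_terms L t) (eval_terms (derive_terms L) t x).
Proof.
move=> + x01; elim: L => [_|tm L IH /andP[tm01 L01]].
  have -> : eval_terms [::] t = cst 0 by apply/funext => y; rewrite eval_terms_nil.
  exact: is_derive_cst.
have -> : eval_terms (tm :: L) t = eval_term tm t + eval_terms L t.
  by apply/funext => y; rewrite eval_terms_cons.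
have -> : derive_terms (tm :: L) = derive_term tm ++ derive_terms L by [].
rewrite {2}/eval_terms big_cat.
exact: is_deriveD (is_derive_eval_term tm01 x01) (IH L01).
Qed.

Lemma derive1n_eval_terms k L t : terms01 t L -> forall x, 0 < x < 1 ->
  derive1n k (eval_terms L t) x = eval_terms (iter k derive_terms L) t x.
Proof.
move=> L01; elim: k => [//|k IH] x x01.
rewrite derive1nS derive1E /=.
rewrite (@near_eq_derive _ _ _ _ (eval_terms (iter k derive_terms L) t)).
  by apply: derive_val; apply: is_derive_eval_terms => //; exact: terms01_iter.
by apply: filterS (near_in01 x01) => y; exact: IH.
Qed.

Lemma smooth01_eval_terms L t : terms01 t L -> smooth01 (eval_terms L t).
Proof.
move=> L01 k x x01.
apply: (@near_eq_derivable _ _ _ (eval_terms (iter k derive_terms L) t)).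
  by apply: filterS (near_in01 x01) => y y01; rewrite derive1n_eval_terms.
by case: (is_derive_eval_terms (terms01_iter k L01) x01).
Qed.

End Fractions.

Section Vanishing.
Variables (R : realType) (P : {poly R}).
Hypothesis P01 : forall x, 0 < x < 1 -> 0 < P.[x] < 1.
Variables (T : Type) (F : set_system T).
Context {FF : Filter F}.

Lemma denprod_ge (m : R) (t : T) (ps : seq (T -> R)) (x : R) : 0 < m -> m <= P.[x] ->
  params01 t ps -> 0 < x < 1 -> m ^+ size ps <= denprod P ps t x.
Proof.
move=> m0 mP + x01; elim: ps => [|p ps IH]; first by rewrite denprod_nil.
rewrite denprod_cons /= exprS => /andP[p01 /IH mps].
apply: ler_pM => //; first exact: ltW.
  exact: exprn_ge0 (ltW m0).
exact: le_trans mP (denP_ge_P P01 p01 x01).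
Qed.

Lemma eval_term_bound (m : R) (tm : term R T) : 0 < m -> exists B : R,
  forall t x, params01 t (params tm) -> 0 < x < 1 -> m <= P.[x] ->
  `|eval_term P tm t x| <= `|coef tm t| * B.
Proof.
move=> m0; have [M qM] := poly_bounded01 (numer tm).
exists (M / m ^+ size (params tm)) => t x tm01 x01 mP.
have den0 := denprod_gt0 P01 tm01 x01.
have mn0 : 0 < m ^+ size (params tm) by rewrite exprn_gt0.
rewrite /eval_term normrM normfV (gtr0_norm den0) normrM -mulrA.
apply: ler_wpM2l => //; apply: ler_pM => //.
- by rewrite invr_ge0 ltW.
- by apply: qM; case/andP: x01 => x0 x1; rewrite !ltW.
- by rewrite lef_pV2 ?posrE // denprod_ge.
Qed.

Fixpoint coefs_vanish (L : seq (term R T)) : Prop :=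
  if L is tm :: L' then coef tm @ F --> (0 : R) /\ coefs_vanish L' else True.

Lemma coefs_vanish_cat L1 L2 :
  coefs_vanish L1 -> coefs_vanish L2 -> coefs_vanish (L1 ++ L2).
Proof. by elim: L1 => //= tm L1 IH [tm0 L10] L20; split => //; exact: IH. Qed.

Lemma coefs_vanish_map (f : (T -> R) -> term R T) ps :
  (forall p, (\forall t \near F, 0 <= p t <= 1) -> coef (f p) @ F --> (0 : R)) ->
  (\forall t \near F, params01 t ps) -> coefs_vanish (map f ps).
Proof.
move=> f0; elim: ps => //= p ps IH ps01.
by split; [apply: f0 | apply: IH]; apply: filterS ps01 => t /andP[].
Qed.

Lemma coefs_vanish_derive L : (\forall t \near F, terms01 t L) ->
  coefs_vanish L -> coefs_vanish (derive_terms P L).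
Proof.
elim: L => // tm L IH L01 [tm0 L0].
have -> : derive_terms P (tm :: L) = derive_term P tm ++ derive_terms P L by [].
apply: coefs_vanish_cat; last by apply: IH => //; apply: filterS L01 => t /andP[].
split => //; apply: coefs_vanish_map => [p p01|]; last by apply: filterS L01 => t /andP[].
apply: (@cvg0_bounded_mul _ _ _ _ (fun t => - (1 - p t)) _ 1) => //.
by apply: filterS p01 => t /andP[p0 p1]; rewrite normrN ger0_norm ?subr_ge0 // gerBl.
Qed.

Lemma coefs_vanish_iter k L : (\forall t \near F, terms01 t L) ->
  coefs_vanish L -> coefs_vanish (iter k (@derive_terms _ P T) L).
Proof.
move=> L01 L0; elim: k => //= k IH; apply: coefs_vanish_derive IH.
by apply: filterS L01 => t; exact: terms01_iter.
Qed.

Lemma eval_terms_vanish (m : R) L : 0 < m -> coefs_vanish L ->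
  exists2 S : T -> R, S @ F --> (0 : R) & forall t x, terms01 t L ->
    0 < x < 1 -> m <= P.[x] -> `|eval_terms P L t x| <= S t.
Proof.
move=> m0; elim: L => [_|tm L IH [tm0 /IH [S S0 LS]]].
  exists (fun=> 0); first exact: cvg_cst.
  by move=> t x _ _ _; rewrite eval_terms_nil normr0.
have [B tmB] := eval_term_bound tm m0.
exists (fun t => `|coef tm t| * B + S t).
  suff : (fun t => `|coef tm t| * B + S t) @ F --> `|0 : R| * B + 0.
    by rewrite normr0 mul0r addr0.
  exact: cvgD (cvgM (cvg_norm tm0) (cvg_cst B)) S0.
move=> t x /andP[tm01 L01] x01 mP; rewrite eval_terms_cons.
by apply: le_trans (ler_normD _ _) _; apply: lerD; [exact: tmB | exact: LS].
Qed.

Lemma frechet_cvg_eval_terms (g : T -> R -> R) (l : R -> R) (L : seq (term R T)) :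
  coefs_vanish L ->
  (\forall t \near F, terms01 t L /\
     forall x, 0 < x < 1 -> g t x - l x = eval_terms P L t x) ->
  frechet_cvg F g l.
Proof.
move=> L0 gL n k n0.
have ab := seminorm_itv_le R n0.
have [c c_ab Pc_min] := EVT_min ab (continuous_subspaceT (@continuous_horner R P)).
have /andP[Pc0 _] := P01 (seminorm_itv_sub01 c_ab).
have L01 : \forall t \near F, terms01 t L by apply: filterS gL => t [].
have [S S0 LS] := eval_terms_vanish Pc0 (coefs_vanish_iter k L01 L0).
apply: (@squeeze_cvge _ _ _ _ (fun=> 0%E) _ (fun t => (S t)%:E)).
- near=> t; have /(_ _)[//|tL01 gLt] := near gL t.
  apply/andP; split.
    apply: le_ereal_sup_tmp.
    exists (`|derive1n k (fun x => g t x - l x) (n.+1%:R^-1)|)%:E.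
      by exists (n.+1%:R^-1) => //=; rewrite in_itv /= lexx ab.
    by rewrite lee_fin.
  apply/ereal_supP => _ [x x_ab <-]; have x01 := seminorm_itv_sub01 x_ab.
  rewrite lee_fin (derive1n_eq01 gLt k x01) (derive1n_eval_terms P01) //.
  by apply: LS; [exact: terms01_iter | exact: x01 | exact: Pc_min].
- exact: cvg_cst.
- by apply: cvg_EFin => //; near=> t.
Unshelve. all: by end_near.
Qed.

End Vanishing.
Section Path.
Variables (R : realType) (P : {poly R}).
Hypothesis P_small : forall x : R, 0 < x < 1 -> 0 < P.[x] < Num.min x (1 - x).

Lemma P_in01 (x : R) : 0 < x < 1 -> 0 < P.[x] < 1.
Proof.
move=> x01; have /andP[-> /=] := P_small x01; rewrite lt_min => /andP[_].
by case/andP: x01 => x0 _; lra.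
Qed.

Lemma cpathE (t x : R) : cpath P t x = x + t * P.[x] / denP P `|t| x.
Proof.
rewrite /cpath /phi /denP; case: ifP => [t0|/negbT]; last rewrite -ltNge => t0.
  rewrite ger0_norm // [P.[x] * t]mulrC.
  by have -> : (1 - P.[x]) * t + P.[x] = t + (1 - t) * P.[x] by ring.
rewrite ltr0_norm //.
have -> : (1 - P.[x]) * - t + P.[x] = - t + (1 - - t) * P.[x] by ring.
ring.
Qed.

Definition cpath_terms : seq (term R R) :=
  [:: Term (fun=> 1) 'X [::]; Term id P [:: fun t => `|t|]].

Lemma cpath_eval_terms (t : R) : cpath P t = eval_terms P cpath_terms t.
Proof.
apply/funext => x; rewrite cpathE !eval_terms_cons eval_terms_nil /eval_term /=.
by rewrite denprod_cons !denprod_nil hornerX invr1 !mulr1 mul1r addr0.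
Qed.

Lemma cpath_terms01 (t : R) : `|t| <= 1 -> terms01 t cpath_terms.
Proof. by move=> t1; rewrite /terms01 /params01 /= normr_le1_in01. Qed.

Lemma smooth01_cpath (t : R) : `|t| <= 1 -> smooth01 (cpath P t).
Proof.
move=> t1; have := smooth01_eval_terms P_in01 (cpath_terms01 t1).
by rewrite -cpath_eval_terms.
Qed.

Lemma cpath_near_id (t x : R) : `|t| <= 1 -> 0 < x < 1 -> `|cpath P t x - x| <= P.[x].
Proof.
move=> t1 x01; have /andP[Px0 _] := P_in01 x01.
have D0 := denP_gt0 P_in01 (normr_le1_in01 t1) x01.
rewrite cpathE addrC addKr normrM normfV (gtr0_norm D0) normrM (gtr0_norm Px0).
rewrite ler_pdivrMr // mulrC ler_pM2l //.
by have := denP_ge_param P_in01 (normr_le1_in01 t1) x01.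
Qed.

Lemma derive1_cpath (t x : R) : `|t| <= 1 -> 0 < x < 1 ->
  derive1 (cpath P t) x = 1 + t * `|t| * P^`().[x] / denP P `|t| x ^+ 2.
Proof.
move=> t1 x01; have D0 := denP_gt0 P_in01 (normr_le1_in01 t1) x01.
rewrite cpath_eval_terms -derive1n1 (derive1n_eval_terms P_in01 1 (cpath_terms01 t1) x01).
rewrite /= !eval_terms_cons eval_terms_nil /eval_term /= !denprod_cons !denprod_nil.
rewrite derivX hornerM hornerC; move: D0; rewrite /denP => D0.
by field; rewrite lt0r_neq0.
Qed.

Lemma derive1_cpath_ge (r t x : R) : (forall y, 0 < y < 1 -> `|P^`().[y]| <= r) ->
  `|t| <= 1 -> 0 < x < 1 -> 1 - r <= derive1 (cpath P t) x.
Proof.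
move=> P'r t1 x01; rewrite derive1_cpath //.
have D0 := denP_gt0 P_in01 (normr_le1_in01 t1) x01.
have tD := denP_ge_param P_in01 (normr_le1_in01 t1) x01.
set D := denP P `|t| x in D0 tD *.
suff : `|t * `|t| * P^`().[x] / D ^+ 2| <= r by rewrite ler_norml => /andP[+ _]; lra.
rewrite normrM normfV normrX (gtr0_norm D0) !normrM normr_id ler_pdivrMr ?exprn_gt0 //.
by rewrite expr2 [r * _]mulrC; apply: ler_pM => //; [apply: ler_pM | exact: P'r].
Qed.

Lemma cpath_D01 (r t : R) : r < 1 -> (forall x, 0 < x < 1 -> `|P^`().[x]| <= r) ->
  `|t| <= 1 -> setD01 (cpath P t).
Proof.
move=> r1 P'r t1.
have near_id x : 0 < x < 1 -> `|cpath P t x - x| <= P.[x] by exact: cpath_near_id.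
have Pmin x : 0 < x < 1 -> P.[x] < Num.min x (1 - x) by move/P_small => /andP[].
have half01 : open01 (2^-1 : R).
  rewrite /open01 /= in_itv /=; apply/andP.
  by split; [rewrite invr_gt0 | rewrite invf_lt1 // ltr1n].
have dc_ge x : open01 x -> 1 - r <= derive1 (cpath P t) x.
  by rewrite /open01 /= in_itv /=; exact: derive1_cpath_ge.
split; [split| |].
- exact: smooth01_cpath.
- by move=> x x01; case: (near_id_bounds near_id Pmin x01).
- exact: near_id_cvg1 near_id Pmin.
- exact: near_id_cvg0 near_id Pmin.
- apply: (@lt_le_trans _ _ (1 - r)%:E); first by rewrite lte_fin subr_gt0.
  by apply/ereal_infP => _ [x x01 <-]; rewrite lee_fin dc_ge.
- apply: (@lt_le_trans _ _ (derive1 (cpath P t) 2^-1)%:E).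
    by rewrite lte_fin (lt_le_trans _ (dc_ge _ half01)) // subr_gt0.
  by apply: ereal_sup_ubound; exists 2^-1.
Qed.

Definition dcpath (t x : R) : R := (P.[x] / denP P `|t| x) ^+ 2.

Lemma dcpath0 (x : R) : 0 < x < 1 -> dcpath 0 x = 1.
Proof.
move=> x01; have /andP[Px0 _] := P_in01 x01.
by rewrite /dcpath /denP normr0 add0r subr0 mul1r divff ?expr1n // lt0r_neq0.
Qed.

Definition dcpath_terms : seq (term R R) :=
  [:: Term (fun=> 1) (P * P) [:: fun t => `|t|; fun t => `|t|]].

Lemma dcpath_eval_terms (t : R) : dcpath t = eval_terms P dcpath_terms t.
Proof.
apply/funext => x; rewrite /dcpath eval_terms_cons eval_terms_nil /eval_term /=.
by rewrite !denprod_cons denprod_nil hornerM mul1r !mulr1 addr0 expr_div_n !expr2.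
Qed.

Lemma smooth01_dcpath (t : R) : `|t| <= 1 -> smooth01 (dcpath t).
Proof.
move=> t1; have t01 : terms01 t dcpath_terms by rewrite /terms01 /params01 /= normr_le1_in01.
by have := smooth01_eval_terms P_in01 t01; rewrite -dcpath_eval_terms.
Qed.

Definition dcpath_diff_terms (t : R) : seq (term R R) :=
  [:: Term (fun s => `|t| - `|s|) (P * P * (1 - P))
        [:: fun=> `|t|; fun s => `|s|; fun s => `|s|];
      Term (fun s => `|t| - `|s|) (P * P * (1 - P))
        [:: fun=> `|t|; fun=> `|t|; fun s => `|s|]].

Lemma dcpath_sub (t s x : R) : `|t| <= 1 -> `|s| <= 1 -> 0 < x < 1 ->
  dcpath s x - dcpath t x = eval_terms P (dcpath_diff_terms t) s x.
Proof.
move=> t1 s1 x01.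
have Dt := denP_gt0 P_in01 (normr_le1_in01 t1) x01.
have Ds := denP_gt0 P_in01 (normr_le1_in01 s1) x01.
rewrite /dcpath !eval_terms_cons eval_terms_nil /eval_term /= !denprod_cons denprod_nil.
rewrite !(hornerM, hornerD, hornerN, hornerC); move: Dt Ds; rewrite /denP => Dt Ds.
by field; rewrite !lt0r_neq0.
Qed.

Lemma cvg_dcpath (t0 : R) : `|t0| < 1 -> frechet_cvg (nbhs t0) dcpath (dcpath t0).
Proof.
move=> t01.
have near1 : \forall s \near t0, `|s| <= 1.
  near=> s; apply: ltW; near: s; exact: cvgr_lt (cvg_norm cvg_id) _ t01.
apply: (frechet_cvg_eval_terms P_in01 (L := dcpath_diff_terms t0)).
  by do 2?split => //; exact: cvg_abs_sub0 cvg_id.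
apply: filterS near1 => s s1; split.
  by rewrite /terms01 /params01 /= !(normr_le1_in01 s1) !(normr_le1_in01 (ltW t01)).
by move=> x x01; exact: dcpath_sub (ltW t01) s1 x01.
Unshelve. all: by end_near.
Qed.

Definition cpath_quot_terms (t : R) : seq (term R R) :=
  [:: Term (fun h => `|t| - `|t + h|) (P * P * (1 - P))
        [:: fun=> `|t|; fun h => `|t + h|; fun=> `|t|]].

Lemma cpath_quot_sub (t h x : R) : 0 <= t * (t + h) -> h != 0 ->
  `|t| <= 1 -> `|t + h| <= 1 -> 0 < x < 1 ->
  (cpath P (t + h) x - cpath P t x) / h - dcpath t x =
  eval_terms P (cpath_quot_terms t) h x.
Proof.
move=> tth h0 t1 th1 x01.
have Dt := denP_gt0 P_in01 (normr_le1_in01 t1) x01.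
have Dth := denP_gt0 P_in01 (normr_le1_in01 th1) x01.
have /andP[Px0 _] := P_in01 x01.
rewrite /dcpath eval_terms_cons eval_terms_nil /eval_term /= !denprod_cons denprod_nil !cpathE.
rewrite !(hornerM, hornerD, hornerN, hornerC); move: Dt Dth; rewrite /denP.
have [t0|t0|->] := ltgtP t 0.
- have th0 : t + h <= 0 by rewrite -(nmulr_rge0 _ t0).
  rewrite (ltr0_norm t0) (ler0_norm th0) => Dt Dth.
  by field; rewrite h0 (lt0r_neq0 Dt) (lt0r_neq0 Dth).
- have th0 : 0 <= t + h by rewrite -(pmulr_rge0 _ t0).
  rewrite (gtr0_norm t0) (ger0_norm th0) => Dt Dth.
  by field; rewrite h0 (lt0r_neq0 Dt) (lt0r_neq0 Dth).
- rewrite normr0 !add0r => _ Dh.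
  by field; rewrite h0 (lt0r_neq0 Px0) (lt0r_neq0 Dh).
Qed.

Lemma cvg_cpath_quot (t0 : R) : `|t0| < 1 ->
  frechet_cvg (0:R)^' (fun h x => (cpath P (t0 + h) x - cpath P t0 x) / h) (dcpath t0).
Proof.
move=> t01.
have t0h : (fun h => t0 + h) @ (0:R)^' --> t0.
  rewrite -[X in _ --> X](addr0 t0).
  by apply: cvgD; [exact: cvg_cst | exact: cvg_within].
apply: (frechet_cvg_eval_terms P_in01 (L := cpath_quot_terms t0)).
  by split => //; exact: cvg_abs_sub0 t0h.
have th1 : \forall h \near (0:R)^', `|t0 + h| <= 1.
  near=> h; apply: ltW; near: h; exact: cvgr_lt (cvg_norm t0h) _ t01.
near=> h; have th1h : `|t0 + h| <= 1 by near: h.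
split; first by rewrite /terms01 /params01 /= !(normr_le1_in01 th1h) !(normr_le1_in01 (ltW t01)).
move=> x x01; apply: cpath_quot_sub => //; last exact: ltW.
- by near: h; exact: nbhs_dnbhs (near0_mul_shift_ge0 t0).
- by near: h; exact: nbhs_dnbhs_neq.
Unshelve. all: by end_near.
Qed.

End Path.

Theorem theorem8p2 (R : realType) (P : {poly R})
  (P0 : P.[0] = 0) (P1 : P.[1] = 0)
  (Pbnd : forall x : R, 0 < x < 1 -> 0 < P.[x] < Num.min x (1 - x))
  (P'bnd : (ereal_sup [set (`|(P^`()).[x]|)%:E | x in @open01 R] < 1)%E) :
  (forall t : R, -1 < t < 1 -> setD01 (cpath P t)) /\
  exists c' : R -> R -> R,
    C1_path_F (cpath P) c' /\ (forall x : R, 0 < x < 1 -> c' 0 x = 1).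
Proof.
(* The boundary values P0 and P1 are not needed. *)
have [r r1 P'r] := ereal_sup_lt_bound P'bnd.
have P'r01 x : 0 < x < 1 -> `|P^`().[x]| <= r.
  by move=> x01; apply: P'r; rewrite /open01 /= in_itv.
have abs_lt1 (t : R) : -1 < t < 1 -> `|t| < 1 by rewrite ltr_norml.
split => [t /abs_lt1/ltW t1|]; first exact (cpath_D01 Pbnd r1 P'r01 t1).
exists (dcpath P); split; last exact: dcpath0 Pbnd.
split=> t /abs_lt1 t1.
- exact (smooth01_dcpath Pbnd (ltW t1)).
- exact: cvg_cpath_quot.
- exact: cvg_dcpath.
Qed.
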